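(* Let $f\ge0$ be integrable on $[-\pi,\pi]$ with $\int f>0$ and such that $\lim_{n\to\infty}\sigma_{n+1}^2(f)/\sigma_n^2(f)=1$. If $g$ is a nonnegative, bounded, measurable function on $[-\pi,\pi]$ that is continuous at $\lambda=0$, then $$\limsup_{n\to\infty}\frac{\sigma_n^2(fg)}{\sigma_n^2(f)}\le g(0).$$
   Context: For a nonnegative integrable weight $w$ on $[-\pi,\pi]$, $\sigma_n^2(w)=\min_{q\in\mathcal{Q}_n(1)}\int_{-\pi}^{\pi}|q(e^{i\lambda})|^2w(\lambda)\,d\lambda$, where $\mathcal{Q}_n(1)$ is the set of complex polynomials of degree at most $n$ with $q(1)=1$. *)

From HB Require Import structures.
From mathcomp Require Import all_boot all_order all_algebra.
From mathcomp Require Import all_classical all_reals all_analysis.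
From mathcomp Require Import complex.
Set Implicit Arguments. Unset Strict Implicit. Unset Printing Implicit Defensive.
Import Order.TTheory GRing.Theory Num.Theory numFieldNormedType.Exports.
Local Open Scope classical_set_scope.
Local Open Scope ring_scope.

Definition expi {R : realType} (l : R) : R[i] := Complex (cos l) (sin l).

Definition Qn1 {R : realType} (n : nat) : set {poly R[i]} :=
  [set q : {poly R[i]} | (size q <= n.+1)%N /\ q.[1] = 1].

Definition qform {R : realType} (w : R -> R) (q : {poly R[i]}) : R :=
  Rintegral lebesgue_measure `[(- pi)%R, pi]%classic
    (fun l : R => (complex.Re q.[expi l] ^+ 2 + complex.Im q.[expi l] ^+ 2) * w l).

(* sigma_n^2(w) = min_{q in Q_n(1)} qform w q  (as an infimum; the min is attained) *)
Definition sigma2 {R : realType} (w : R -> R) (n : nat) : R :=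
  inf [set qform w q | q in Qn1 n].

From HB Require Import structures.
From mathcomp Require Import all_boot all_order all_algebra.
From mathcomp Require Import all_classical all_reals all_analysis.
From mathcomp Require Import complex measurable_realfun.
From mathcomp Require Import ring lra zify.
Set Implicit Arguments. Unset Strict Implicit. Unset Printing Implicit Defensive.
Import Order.TTheory GRing.Theory Num.Theory numFieldNormedType.Exports.
Local Open Scope classical_set_scope.
Local Open Scope ring_scope.

(* If q is admissible for sigma_m^2(f), then q times the peak polynomial
   ((z + 1) / 2)^j is admissible for sigma_(m+j)^2(fg), and its extra factor
   |(e^(il) + 1) / 2|^(2j) = ((1 + cos l) / 2)^j equals 1 at l = 0 and is
   uniformly small away from 0.  Since g is bounded and continuous at 0, for
   j large this factor times g is at most g(0) + e on [-pi, pi], whence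
   sigma_(m+j)^2(fg) <= (g(0) + e) sigma_m^2(f).  The ratio hypothesis makes
   sigma_m^2(f) / sigma_(m+j)^2(f) tend to 1 for every fixed j. *)

Lemma limn_esup_le_near {R : realType} (u : (\bar R)^nat) (l : \bar R) :
  (\forall n \near \oo, u n <= l)%E -> (limn_esup u <= l)%E.
Proof.
move=> ul; rewrite /limn_esup limf_esupE.
apply: (le_trans (ereal_inf_lbound _)); first by exists [set n | u n <= l]%E.
by apply: ge_ereal_sup => _ [n un <-].
Qed.

Section SquaredModulus.
Variable R : rcfType.
Implicit Types z w : R[i].

Definition sqrnormc z : R := complex.Re z ^+ 2 + complex.Im z ^+ 2.

Lemma sqrnormc_ge0 z : 0 <= sqrnormc z.
Proof. by rewrite addr_ge0 // sqr_ge0. Qed.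

Lemma sqrnormcM z w : sqrnormc (z * w) = sqrnormc z * sqrnormc w.
Proof. by case: z => a b; case: w => c d; rewrite /sqrnormc /=; ring. Qed.

Lemma sqrnormcX z j : sqrnormc (z ^+ j) = sqrnormc z ^+ j.
Proof.
elim: j => [|j IH]; first by rewrite !expr0 /sqrnormc /=; ring.
by rewrite !exprS sqrnormcM IH.
Qed.

End SquaredModulus.

Section PeakPolynomial.
Variable R : realType.

Definition peak_poly (j : nat) : {poly R[i]} := 2^-j *: ('X + 1) ^+ j.

Lemma horner_peak_poly j z : (peak_poly j).[z] = ((z + 1) / 2) ^+ j.
Proof. by rewrite hornerZ horner_exp hornerD hornerX hornerC exprMn exprVn mulrC. Qed.

Lemma peak_poly_Qn1 j : Qn1 j (peak_poly j).
Proof.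
split; last by rewrite horner_peak_poly (_ : (1 + 1) / 2 = 1) ?expr1n //; field.
apply: leq_trans (size_scale_leq _ _) _.
by apply: leq_trans (size_poly_exp_leq _ _) _; rewrite -polyC1 size_XaddC mul1n.
Qed.

Lemma sqrnormc_peak_poly_expi j l :
  sqrnormc (peak_poly j).[expi l] = ((1 + cos l) / 2) ^+ j.
Proof.
rewrite horner_peak_poly sqrnormcX /sqrnormc /expi /=; congr (_ ^+ _).
transitivity (((cos l + 1) ^+ 2 + sin l ^+ 2) / 4); first by field.
by rewrite -[sin l ^+ 2](addKr (cos l ^+ 2)) cos2Dsin2; field.
Qed.

End PeakPolynomial.
Arguments peak_poly {R} j.

Lemma Qn1_mul {R : realType} m k (p q : {poly R[i]}) :
  Qn1 m p -> Qn1 k q -> Qn1 (m + k) (p * q).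
Proof.
move=> [sp p1] [sq q1]; split; last by rewrite hornerM p1 q1 mulr1.
apply: leq_trans (size_polyMleq _ _) _; lia.
Qed.

Lemma bounded_on_le {R : realType} (T : Type) (D : set T) (h : T -> R) (C : R) :
  (forall x, D x -> `|h x| <= C) -> [bounded h x | x in D].
Proof.
move=> hC; exists C; split; first exact: num_real.
by move=> M /ltW CM x Dx; apply: le_trans (hC x Dx) CM.
Qed.

Section BoundedMeasurable.
Variable R : realType.
Implicit Types h : R -> R.

Definition bounded_measurable h :=
  measurable_fun setT h /\ exists C, forall x, `|h x| <= C.

Lemma bounded_measurable_cst c : bounded_measurable (fun=> c).
Proof. by split; [exact: measurable_cst | exists `|c|]. Qed.

Lemma bounded_measurable_cos : bounded_measurable (@cos R).
Proof.
split; first exact: continuous_measurable_fun (@continuous_cos R).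
by exists 1 => x; rewrite ler_norml cos_le1 cos_geN1.
Qed.

Lemma bounded_measurable_sin : bounded_measurable (@sin R).
Proof.
split; first exact: continuous_measurable_fun (@continuous_sin R).
by exists 1 => x; rewrite ler_norml sin_le1 sin_geN1.
Qed.

Lemma bounded_measurableD h1 h2 : bounded_measurable h1 -> bounded_measurable h2 ->
  bounded_measurable (h1 \+ h2).
Proof.
move=> [m1 [C1 b1]] [m2 [C2 b2]]; split; first exact: measurable_funD.
by exists (C1 + C2) => x; apply: le_trans (ler_normD _ _) (lerD (b1 x) (b2 x)).
Qed.

Lemma bounded_measurableB h1 h2 : bounded_measurable h1 -> bounded_measurable h2 ->
  bounded_measurable (h1 \- h2).
Proof.
move=> [m1 [C1 b1]] [m2 [C2 b2]]; split; first exact: measurable_funB.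
by exists (C1 + C2) => x; apply: le_trans (ler_normB _ _) (lerD (b1 x) (b2 x)).
Qed.

Lemma bounded_measurableM h1 h2 : bounded_measurable h1 -> bounded_measurable h2 ->
  bounded_measurable (h1 \* h2).
Proof.
move=> [m1 [C1 b1]] [m2 [C2 b2]]; split; first exact: measurable_funM.
by exists (C1 * C2) => x; rewrite normrM ler_pM.
Qed.

Lemma bounded_measurable_horner_expi (p : {poly R[i]}) :
  bounded_measurable (fun l => complex.Re p.[expi l]) /\
  bounded_measurable (fun l => complex.Im p.[expi l]).
Proof.
elim/poly_ind: p => [|p c [bRe bIm]].
  by split; under eq_fun do rewrite horner0; exact: bounded_measurable_cst.
have cos_bm := bounded_measurable_cos; have sin_bm := bounded_measurable_sin.
have ReE (z w : R[i]) l : complex.Re (z * expi l + w) =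
    complex.Re z * cos l - complex.Im z * sin l + complex.Re w.
  by case: z w => ? ? [? ?].
have ImE (z w : R[i]) l : complex.Im (z * expi l + w) =
    complex.Re z * sin l + complex.Im z * cos l + complex.Im w.
  by case: z w => ? ? [? ?].
split; under eq_fun do rewrite hornerMXaddC ?ReE ?ImE.
  apply: bounded_measurableD (bounded_measurable_cst _).
  by apply: bounded_measurableB; exact: bounded_measurableM.
apply: bounded_measurableD (bounded_measurable_cst _).
by apply: bounded_measurableD; exact: bounded_measurableM.
Qed.

Lemma bounded_measurable_sqrnormc_horner_expi (p : {poly R[i]}) :
  bounded_measurable (fun l => sqrnormc p.[expi l]).
Proof.
have [bRe bIm] := bounded_measurable_horner_expi p.
by apply: bounded_measurableD; under eq_fun do rewrite expr2; exact: bounded_measurableM.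
Qed.

Lemma integrable_sqrnormc_horner_expiM (D : set R) (w : R -> R) (p : {poly R[i]}) :
  measurable D -> lebesgue_measure.-integrable D (EFin \o w) ->
  lebesgue_measure.-integrable D (EFin \o (fun l => sqrnormc p.[expi l] * w l)).
Proof.
move=> mD wi; have [mp [C bp]] := bounded_measurable_sqrnormc_horner_expi p.
have -> : EFin \o (fun l => sqrnormc p.[expi l] * w l) =
    ((EFin \o (fun l => sqrnormc p.[expi l])) \* (EFin \o w))%E.
  by apply/funext => l /=; rewrite EFinM.
apply: integrableMr => //; first exact: measurable_funTS.
by apply: (bounded_on_le (C := C)) => x _; exact: bp.
Qed.

End BoundedMeasurable.

Section OptimalPredictionError.
Variable R : realType.
Implicit Types (w v : R -> R) (p q : {poly R[i]}).
Local Notation Dpi := (`[(- pi)%R, pi]%classic : set R).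
Local Notation Dpi_integrable w := (lebesgue_measure.-integrable Dpi (EFin \o w)).

Lemma qform_ge0 w q : (forall x, Dpi x -> 0 <= w x) -> 0 <= qform w q.
Proof.
move=> w0; apply: Rintegral_ge0 => x /w0 ?.
by apply: mulr_ge0 => //; exact: sqrnormc_ge0.
Qed.

Lemma qformM w p q : qform w (q * p) = qform (fun l => sqrnormc p.[expi l] * w l) q.
Proof.
apply: eq_Rintegral => l _.
by rewrite hornerM -[_ + _]/(sqrnormc _) sqrnormcM mulrA.
Qed.

Lemma qformZ w c q : Dpi_integrable w -> qform (fun l => c * w l) q = c * qform w q.
Proof.
move=> wi; rewrite /qform -RintegralZl; last first.
- exact: (@integrable_sqrnormc_horner_expiM _ _ _ q).
- exact: measurable_itv.
by apply: eq_Rintegral => l _; rewrite mulrCA.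
Qed.

Lemma le_qform w v q : Dpi_integrable w -> Dpi_integrable v ->
  (forall x, Dpi x -> w x <= v x) -> qform w q <= qform v q.
Proof.
move=> wi vi wv; apply: le_Rintegral.
- exact: measurable_itv.
- exact: (@integrable_sqrnormc_horner_expiM _ _ _ q).
- exact: (@integrable_sqrnormc_horner_expiM _ _ _ q).
by move=> x Dx; apply: ler_wpM2l (wv x Dx); exact: sqrnormc_ge0.
Qed.

Lemma sigma2_le w n q : (forall x, Dpi x -> 0 <= w x) -> Qn1 n q ->
  sigma2 w n <= qform w q.
Proof.
move=> w0 qn; apply: ge_inf; last by exists q.
by exists 0 => _ [p _ <-]; exact: qform_ge0.
Qed.

Lemma sigma2_ge w n c : (forall q, Qn1 n q -> c <= qform w q) -> c <= sigma2 w n.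
Proof.
move=> cw; apply: lb_le_inf => [|_ [q qn <-]]; last exact: cw.
by exists (qform w 1), 1 => //; split; rewrite ?size_poly1 ?hornerC.
Qed.

Lemma sigma2_ge0 w n : (forall x, Dpi x -> 0 <= w x) -> 0 <= sigma2 w n.
Proof. by move=> w0; apply: sigma2_ge => q _; exact: qform_ge0. Qed.

Lemma sigma2_peak_le w v j m (B : R) : 0 < B ->
  (forall x, Dpi x -> 0 <= w x) -> Dpi_integrable w -> Dpi_integrable v ->
  (forall l, Dpi l -> ((1 + cos l) / 2) ^+ j * w l <= B * v l) ->
  sigma2 w (m + j) <= B * sigma2 v m.
Proof.
move=> B0 w0 wi vi wv; rewrite mulrC -ler_pdivrMr //.
apply: sigma2_ge => q qm; rewrite ler_pdivrMr // mulrC -qformZ //.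
apply: le_trans (sigma2_le w0 (Qn1_mul qm (peak_poly_Qn1 _ j))) _.
rewrite qformM; apply: le_qform.
- exact: integrable_sqrnormc_horner_expiM.
- have -> : EFin \o (fun l => B * v l) = (fun l => B%:E * (EFin \o v) l)%E.
    by apply/funext => l; rewrite /= EFinM.
  by apply: integrableZl vi; exact: measurable_itv.
by move=> l Dl; rewrite sqrnormc_peak_poly_expi; exact: wv.
Qed.

End OptimalPredictionError.

Section RatioLimits.
Variable R : realType.
Implicit Types (a s : nat -> R).

Lemma near_shiftn (P : nat -> Prop) j :
  (\forall m \near \oo, P (m + j)%N) -> \forall n \near \oo, P n.
Proof.
move=> [N _ PN]; exists (N + j)%N => // n /= Nn.
by rewrite -(subnK (leq_trans (leq_addl N j) Nn)); apply: PN => /=; lia.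
Qed.

Lemma ratio_cvg1_neq0 s : (s n.+1 / s n) @[n --> \oo] --> (1 : R) ->
  \forall n \near \oo, s n != 0.
Proof.
move=> sr; have half_lt1 : 2^-1 < 1 :> R by rewrite invf_lt1 ?ltr1n.
apply: filterS (cvgr_gt _ sr _ half_lt1) => n; apply: contraTneq => ->.
by rewrite invr0 mulr0 -leNgt invr_ge0 ler0n.
Qed.

Lemma ratio_shiftn_cvg1 s j : (s n.+1 / s n) @[n --> \oo] --> (1 : R) ->
  (s n / s (n + j)%N) @[n --> \oo] --> (1 : R).
Proof.
move=> sr; have s_neq0 := ratio_cvg1_neq0 sr.
elim: j => [|j IHj].
  by apply: cvg_near_cst; near do rewrite addn0 divff //.
have sr_inv : (s (n + j)%N / s (n + j).+1) @[n --> \oo] --> (1 : R).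
  rewrite (cvg_shiftn j (fun n => s n / s n.+1)) -[1]invr1.
  under eq_fun do rewrite -invf_div.
  exact: cvgV (oner_neq0 R) sr.
have telescope : {near \oo,
    (fun n => s n / s (n + j)%N) \* (fun n => s (n + j)%N / s (n + j).+1) =1
    (fun n => s n / s (n + j.+1)%N)}.
  near=> n; rewrite /= addnS mulrA divfK //.
  by near: n; exact: cvg_addnr j _ s_neq0.
apply: cvg_trans (near_eq_cvg telescope) _.
by rewrite -(mulr1 (1 : R)); exact: cvgM.
Unshelve. all: by end_near.
Qed.

Lemma limn_esup_div_le a s j (B : R) : 0 <= B -> (forall n, 0 <= s n) ->
  (s n.+1 / s n) @[n --> \oo] --> (1 : R) ->
  (forall m, a (m + j)%N <= B * s m) ->
  (limn_esup (fun n => (a n / s n)%:E) <= B%:E)%E.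
Proof.
move=> B0 s0 sr aB; apply/lee_addgt0Pr => e e0; apply: limn_esup_le_near.
apply: (@near_shiftn (fun n => (a n / s n)%:E <= (B + e)%:E)%E j).
have Bsr : (B * (s m / s (m + j)%N)) @[m --> \oo] --> B.
  by rewrite -[X in _ --> X]mulr1; apply: cvgMl_tmp; exact: ratio_shiftn_cvg1.
near=> m; rewrite lee_fin.
have [->|s_neq0] := eqVneq (s (m + j)%N) 0.
  (* x / 0 = 0, so this case only needs 0 <= B + e. *)
  by rewrite invr0 mulr0 addr_ge0 // ltW.
have s_gt0 : 0 < s (m + j)%N by rewrite lt_def s_neq0 s0.
rewrite ler_pdivrMr //; apply: le_trans (aB m) _.
rewrite -ler_pdivrMr // -mulrA ltW //.
by near: m; apply: (cvgr_lt _ Bsr); rewrite ltrDl.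
Unshelve. all: by end_near.
Qed.

End RatioLimits.

Section PeakWeight.
Variable R : realType.
Local Notation Dpi := (`[(- pi)%R, pi]%classic : set R).

Lemma cos_le_cos_norm (d l : R) : 0 <= d <= pi -> -pi <= l <= pi -> d <= `|l| ->
  cos l <= cos d.
Proof.
move=> /andP[d0 dpi] /andP[l1 l2] dl.
have lpi : `|l| <= pi by rewrite ler_norml l1 l2.
have -> : cos l = cos `|l| by case: (ger0P l) => // _; rewrite cosN.
case: ltgtP dl => // [dl _|<- //]; apply: ltW.
by rewrite ltr_cos // in_itv /= ?d0 ?dpi // normr_ge0.
Qed.

Lemma peak_weight_le (g : R -> R) (M e : R) : 0 < e ->
  (forall x, Dpi x -> 0 <= g x) -> (forall x, Dpi x -> g x <= M) ->
  {for 0, continuous g} ->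
  exists j, forall l, Dpi l -> ((1 + cos l) / 2) ^+ j * g l <= g 0 + e.
Proof.
move=> e0 g0 gM g_cont.
have Dpi0 : Dpi 0 by rewrite /= in_itv /= oppr_le0 pi_ge0.
have [d d0 near0] : exists2 d, 0 < d & forall l, `|l| < d -> g l < g 0 + e.
  have /nbhs_ballP[d d0 gd] : \forall l \near 0, g l < g 0 + e.
    by apply: (cvgr_lt _ g_cont); rewrite ltrDl.
  by exists d => // l ld; apply: gd; rewrite /ball /= sub0r normrN.
pose d' := Num.min d pi; pose c := (1 + cos d') / 2.
have d'_itv : 0 <= d' <= pi by rewrite ge_min lexx orbT le_min (ltW d0) pi_ge0.
have d'_le_d : d' <= d by rewrite ge_min lexx.
have c_itv : 0 <= c < 1.
  have : cos d' < 1.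
    by rewrite -(cos0 R) ltr_cos ?lt_min ?d0 ?pi_gt0 // bound_itvE pi_ge0.
  by have := cos_geN1 d'; rewrite /c; lra.
have [j Mcj] : exists j, M * c ^+ j < e.
  have Mc_cvg : (M * c ^+ j) @[j --> \oo] --> (0 : R).
    rewrite -(mulr0 M); apply: cvgMl_tmp; apply: cvg_expr.
    by rewrite ger0_norm //; case/andP: c_itv.
  by have [N _ /(_ N (leqnn N))] := cvgr_lt _ Mc_cvg _ e0; exists N.
exists j => l Dl; pose a := (1 + cos l) / 2.
have a_itv : 0 <= a <= 1 by have := cos_geN1 l; have := cos_le1 l; rewrite /a; lra.
have [a0 a1] := andP a_itv.
have [ld|ld] := ltP `|l| d'.
  have := near0 l (lt_le_trans ld d'_le_d).
  by have := ler_piMl (g0 l Dl) (exprn_ile1 j a0 a1); lra.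
have ac : a <= c.
  by have := cos_le_cos_norm d'_itv Dl ld; rewrite /a /c; lra.
have : a ^+ j * g l <= c ^+ j * M.
  by apply: ler_pM; rewrite ?exprn_ge0 ?g0 ?gM ?lerXn2r ?nnegrE //; case/andP: c_itv.
by have := g0 0 Dpi0; rewrite mulrC in Mcj; lra.
Qed.

End PeakWeight.

Theorem lemma5p4 (R : realType) (f g : R -> R) :
  measurable_fun `[(- pi)%R, pi] f ->
  (forall x, x \in `[(- pi)%R, pi] -> 0 <= f x) ->
  lebesgue_measure.-integrable `[(- pi)%R, pi] (EFin \o f) ->
  (0 < \int[lebesgue_measure]_(x in `[(- pi)%R, pi]) (f x)%:E)%E ->
  (sigma2 f n.+1 / sigma2 f n) @[n --> \oo] --> (1 : R) ->
  measurable_fun `[(- pi)%R, pi] g ->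
  (forall x, x \in `[(- pi)%R, pi] -> 0 <= g x) ->
  (exists M : R, forall x, x \in `[(- pi)%R, pi] -> g x <= M) ->
  {for 0, continuous g} ->
  (limn_esup (fun n => (sigma2 (fun l => f l * g l) n / sigma2 f n)%:E)
     <= (g 0)%:E)%E.
Proof.
move=> _ f0 fi _ sr mg g0 [M gM] g_cont.
have fg0 x : x \in `[(- pi)%R, pi] -> 0 <= f x * g x.
  by move=> Dx; rewrite mulr_ge0 ?f0 ?g0.
have fgi : lebesgue_measure.-integrable `[(- pi)%R, pi]
    (EFin \o (fun l => f l * g l)).
  have -> : EFin \o (fun l => f l * g l) = ((EFin \o f) \* (EFin \o g))%E.
    by apply/funext => l; rewrite /= EFinM.
  apply: integrableMl => //.
  by apply: (bounded_on_le (C := M)) => x Dx; rewrite ger0_norm ?g0 ?gM.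
apply/lee_addgt0Pr => e e0; rewrite -EFinD.
have [j peak] := peak_weight_le e0 g0 gM g_cont.
apply: (limn_esup_div_le (j := j)) => //.
- by rewrite addr_ge0 ?g0 ?ltW // in_itv /= oppr_le0 pi_ge0.
- by move=> n; exact: sigma2_ge0.
move=> m; apply: sigma2_peak_le => //.
- by rewrite ltr_pwDr // g0 // in_itv /= oppr_le0 pi_ge0.
move=> l Dl; rewrite mulrCA [leRHS]mulrC.
by apply: ler_wpM2l; [exact: f0 | exact: peak].
Qed.
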